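(* Let $l\in\{1,\dots,n-1\}$. For $I\subseteq[1,n-1]$ set $\alpha(I)=c_{I\cap[1,l-1]}\,c_{[l,n-1]\setminus(I\cap[l,n-1])}\,\sigma_{[l,n]}\,a_l$. Then $\ell(t\alpha(I))>\ell(\alpha(I))$ if and only if $[1,l-1]\subsetneq I$.
   Context: $W_n$ is the Weyl group of type $B_n$ with Coxeter generators $t,s_1,\dots,s_{n-1}$ ($(ts_1)^4=1$, $(s_is_{i+1})^3=1$, other distinct pairs commute), $\ell$ its length function. $[i,j]=\{i,i+1,\dots,j\}$ (empty if $j<i$). Set $r_1=t$, $r_{i+1}=s_ir_i$, $a_l=r_1\cdots r_l$. For $1\le i\le j\le n$, $\sigma_{[i,j]}$ is the longest element of the subgroup generated by $s_i,\dots,s_{j-1}$. For $J=\{j_1<\dots<j_k\}\subseteq[1,n-1]$, $c_J=s_{j_1}s_{j_2}\cdots s_{j_k}$ ($c_\varnothing=1$). *)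

(* Model of the Weyl group W_n of type B_n as signed
   permutations of {1..n}: a point (j, b) : 'I_n * bool stands for the
   signed index (-1)^b (j+1). *)
From mathcomp Require Import all_boot.
Set Implicit Arguments. Unset Strict Implicit. Unset Printing Implicit Defensive.

Section WeylB.
Variable n : nat.

Definition eltB := {ffun 'I_n * bool -> 'I_n * bool}.

Definition mulB (f g : eltB) : eltB := [ffun x => f (g x)].
Definition oneB : eltB := [ffun x => x].
Definition prodB (s : seq eltB) : eltB := foldr mulB oneB s.

Definition tB : eltB :=
  [ffun x : 'I_n * bool => if val x.1 == 0 then (x.1, ~~ x.2) else x].

(* swap of positions i-1 and i (0-based), i.e. of 1-based i and i+1 *)
Definition swp (i : nat) (j : 'I_n) : 'I_n :=
  if val j == i.-1 then insubd j i
  else if val j == i then insubd j i.-1 else j.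

Definition sB (i : nat) : eltB := [ffun x : 'I_n * bool => (swp i x.1, x.2)].

Definition genB (i : nat) : eltB := if i == 0 then tB else sB i.

Definition wordB (P : pred nat) (k : nat) (g : eltB) : bool :=
  [exists w : k.-tuple 'I_n,
     all P (map val w) && (prodB (map (fun i : 'I_n => genB i) w) == g)].

Definition boundB : nat := #|{: eltB}|.+1.

Definition lenB (g : eltB) : nat :=
  find (fun k => wordB predT k g) (iota 0 boundB).

Definition in_parab (i j : nat) (g : eltB) : bool :=
  [exists k : 'I_boundB, wordB (fun a => (i <= a) && (a < j)) k g].

Definition sigmaB (i j : nat) : eltB :=
  [arg max_(g > oneB | in_parab i j g) lenB g].

Definition cB (J : pred nat) : eltB :=
  prodB [seq sB j | j <- iota 1 n.-1 & J j].

Fixpoint rB (k : nat) : eltB :=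
  match k with
  | 0 => oneB
  | k'.+1 => if k' is 0 then tB else mulB (sB k') (rB k')
  end.

Definition aB (l : nat) : eltB := prodB [seq rB i | i <- iota 1 l].

Definition alphaB (l : nat) (I : {set 'I_n}) : eltB :=
  let inI := fun j : nat => [exists i in I, val i == j] in
  mulB (cB (fun j => inI j && (j < l)))
    (mulB (cB (fun j => (l <= j) && ~~ inI j))
       (mulB (sigmaB l n) (aB l))).

End WeylB.

From mathcomp Require Import all_boot all_order ssralg ssrnum ssrint zify.

Set Implicit Arguments. Unset Strict Implicit. Unset Printing Implicit Defensive.
Import Order.TTheory GRing.Theory Num.Theory.

(* Elements of W_n are signed permutations, and their Coxeter length is the
   type-B inversion number
     #{i < j | w(i) > w(j)} + #{i <= j | w(i) + w(j) < 0}: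
   left multiplication by a generator changes it by exactly one, and every
   w <> 1 has a generator that decreases it.  Hence l(t w) > l(w) iff the
   preimage w^-1(1) is positive, and it remains to locate alpha(I)^-1(1).
   Being longest, sigma_[l,n] preserves signs, fixes 1, ..., l-1 and maps l
   to n (otherwise some s_k with k >= l would lengthen it).  Reading
   alpha(I) from the right:
   - if m is the least element of [1, l-1] missing from I, then
     -(l+1-m) |-> m under a_l, and the other factors carry m to 1;
   - if [1, l-1] <= I and I meets [l, n-1] in no point, then
     -1 |-> l |-> n |-> l |-> 1;
   - if m is the least element of I in [l, n-1], the preimage of 1 is
     sigma_[l,n]^-1(m) > l, fixed by a_l. *)

Section SumNatExcept.
Variables (T : finType) (F G : T -> nat).

Lemma sum_nat_eq_except1 u : (forall z, z != u -> F z = G z) ->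
  \sum_z F z + G u = \sum_z G z + F u.
Proof.
move=> FG; rewrite (bigD1 u (F := F)) // (bigD1 u (F := G)) //=.
by rewrite (eq_bigr G) => [|z /FG]; [lia|].
Qed.

Lemma sum_nat_eq_except2 u v : u != v ->
  (forall z, z != u -> z != v -> F z = G z) ->
  \sum_z F z + G u + G v = \sum_z G z + F u + F v.
Proof.
move=> uv FG; rewrite (bigD1 u (F := F)) // (bigD1 u (F := G)) //=.
rewrite (bigD1 v (F := F)) 1?eq_sym // (bigD1 v (F := G)) 1?eq_sym //=.
by rewrite (eq_bigr G) => [|z /andP[/FG]]; [lia|].
Qed.

End SumNatExcept.

Section SignedPermutations.
Variable n : nat.
Local Notation pt := ('I_n * bool)%type.
Implicit Types (x y z : pt) (w : eltB n).

Definition negpt z : pt := (z.1, ~~ z.2).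

Definition sidx z : int := if z.2 then (- Posz z.1.+1)%R else Posz z.1.+1.

Definition act_s (k : nat) (a : int) : int :=
  if a == Posz k then Posz k.+1 else if a == Posz k.+1 then Posz k
  else if a == (- Posz k)%R then (- Posz k.+1)%R
  else if a == (- Posz k.+1)%R then (- Posz k)%R else a.

Definition act_t (a : int) : int :=
  if a == 1%R then (-1)%R else if a == (-1)%R then 1%R else a.

Definition signed_perm w := injective w /\ forall z, w (negpt z) = negpt (w z).

Definition window w (i : 'I_n) : int := sidx (w (i, false)).

Definition pair_inv (a b : int) (i j : 'I_n) : nat :=
  ((i < j) && (b < a)%R) + ((i <= j) && (a + b < 0)%R).

Definition ninv (f : 'I_n -> int) : nat :=
  \sum_(z : 'I_n * 'I_n) pair_inv (f z.1) (f z.2) z.1 z.2.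

Definition ninvB w : nat := ninv (window w).

Lemma sidx_inj : injective sidx.
Proof.
move=> [[p hp] [|]] [[q hq] [|]]; rewrite /sidx /= => e; try lia;
  by congr (_, _); apply: val_inj => /=; lia.
Qed.

Lemma sidx_neq0 z : sidx z != 0%R.
Proof. by rewrite /sidx; case: z.2; lia. Qed.

Lemma sidx_negpt z : sidx (negpt z) = (- sidx z)%R.
Proof. by rewrite /sidx /=; case: z.2; rewrite ?opprK. Qed.

Lemma sidx_le z : (sidx z <= Posz z.1.+1)%R.
Proof. by rewrite /sidx; case: z.2; lia. Qed.

Lemma negptK : involutive negpt.
Proof. by case=> i b; rewrite /negpt negbK. Qed.

Lemma sidx_posE z c : sidx z = Posz c.+1 -> z.1 = c :> nat /\ z.2 = false.
Proof. by rewrite /sidx; case: z.2; lia. Qed.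

Lemma val_swp k (p : 'I_n) : 0 < k < n ->
  swp k p = (if p == k.-1 :> nat then k else if p == k :> nat then k.-1 else p) :> nat.
Proof.
move=> /andP[k0 kn]; rewrite /swp /=.
case: ifP => _; first by rewrite val_insubd kn.
by case: ifP => // _; rewrite val_insubd (leq_ltn_trans (leq_pred k) kn).
Qed.

Lemma sB_fix k z : z.1 != k.-1 :> nat -> z.1 != k :> nat -> sB n k z = z.
Proof. by rewrite ffunE /swp => /negbTE-> /negbTE->; case: z. Qed.

Lemma sidx_sB k z : 0 < k < n -> sidx (sB n k z) = act_s k (sidx z).
Proof.
move=> hk; rewrite /sidx /sB ffunE /= val_swp // /act_s.
case/andP: hk; case: z => [[p hp] [|]] /= *; repeat case: eqP; lia.
Qed.

Lemma sidx_tB z : sidx (tB n z) = act_t (sidx z).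
Proof.
rewrite /sidx /tB ffunE /act_t.
case: z => [[p hp] [|]] /=; case: eqP => /= *; repeat case: eqP; lia.
Qed.

Lemma window_sB k w i : 0 < k < n -> window (mulB (sB n k) w) i = act_s k (window w i).
Proof. by move=> hk; rewrite /window ffunE sidx_sB. Qed.

Lemma window_tB w i : window (mulB (tB n) w) i = act_t (window w i).
Proof. by rewrite /window ffunE sidx_tB. Qed.

Lemma act_s_swaps k : 0 < k ->
  [/\ act_s k (Posz k) = Posz k.+1, act_s k (Posz k.+1) = Posz k,
      act_s k (- Posz k)%R = (- Posz k.+1)%R & act_s k (- Posz k.+1)%R = (- Posz k)%R].
Proof. by move=> k0; rewrite /act_s; split; repeat case: eqP; lia. Qed.

Lemma pair_inv_act_s k a b i j : 0 < k ->
  ~ ((a = Posz k \/ a = (- Posz k)%R) /\ (b = Posz k.+1 \/ b = (- Posz k.+1)%R)) ->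
  ~ ((b = Posz k \/ b = (- Posz k)%R) /\ (a = Posz k.+1 \/ a = (- Posz k.+1)%R)) ->
  pair_inv (act_s k a) (act_s k b) i j = pair_inv a b i j.
Proof. by move=> *; rewrite /pair_inv /act_s; repeat case: eqP => ?; lia. Qed.

Lemma pair_inv_act_t a b i j : a != 0%R -> b != 0%R ->
  ~ ((a = 1%R \/ a = (-1)%R) /\ (b = 1%R \/ b = (-1)%R)) ->
  pair_inv (act_t a) (act_t b) i j = pair_inv a b i j.
Proof. by move=> *; rewrite /pair_inv /act_t; repeat case: eqP => ?; lia. Qed.

Section OneSignedPerm.
Variable w : eltB n.
Hypothesis sw : signed_perm w.

Lemma window_fst x : window w x.1 = if x.2 then (- sidx (w x))%R else sidx (w x).
Proof.
case: x => i [] //=; rewrite /window.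
by rewrite -[(i, false)]/(negpt (i, true)) (proj2 sw) sidx_negpt.
Qed.

Lemma window_eq_pt i x :
  window w i = sidx (w x) \/ window w i = (- sidx (w x))%R -> i = x.1.
Proof.
rewrite -sidx_negpt -(proj2 sw) /window.
by case=> /sidx_inj/(proj1 sw)/(congr1 fst).
Qed.

Lemma signed_perm_sidx_surj c : c < n -> exists x, sidx (w x) = Posz c.+1.
Proof.
move=> cn; have [v _ wv] := injF_bij (proj1 sw).
by exists (v (Ordinal cn, false)); rewrite wv.
Qed.

Lemma ninvB_sB x y k : 0 < k -> sidx (w x) = Posz k -> sidx (w y) = Posz k.+1 ->
  ninvB (mulB (sB n k) w) + (sidx y < sidx x)%R = ninvB w + (sidx x < sidx y)%R.
Proof.
move=> k0 wx wy.
have kn : k < n by case: (sidx_posE wy) => <- _; exact: ltn_ord.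
have wxE := window_fst x; have wyE := window_fst y; rewrite wx in wxE; rewrite wy in wyE.
have xy : x.1 != y.1 by apply/eqP => e; move: wxE; rewrite e wyE; case: x.2; case: y.2; lia.
have kx i : window w i = Posz k \/ window w i = (- Posz k)%R -> i = x.1.
  by rewrite -wx; apply: window_eq_pt.
have ky i : window w i = Posz k.+1 \/ window w i = (- Posz k.+1)%R -> i = y.1.
  by rewrite -wy; apply: window_eq_pt.
have uv : (x.1, y.1) != (y.1, x.1) by apply: (contra_neq _ xy); case.
pose G (p : 'I_n * 'I_n) := pair_inv (window w p.1) (window w p.2) p.1 p.2.
pose F (p : 'I_n * 'I_n) :=
  pair_inv (act_s k (window w p.1)) (act_s k (window w p.2)) p.1 p.2.
have FG p : p != (x.1, y.1) -> p != (y.1, x.1) -> F p = G p.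
  case: p => i j /= ne1 ne2; apply: pair_inv_act_s => // -[hi hj].
  - by move: ne1; rewrite (kx i hi) (ky j hj) eqxx.
  - by move: ne2; rewrite (kx j hi) (ky i hj) eqxx.
have {FG} := sum_nat_eq_except2 uv FG.
have -> : \sum_p F p = ninvB (mulB (sB n k) w).
  by apply: eq_bigr => p _; rewrite /F !window_sB ?k0.
rewrite -/(ninv (window w)) -/(ninvB w) {}/F {}/G /= wxE wyE /sidx.
have [a1 a2 a3 a4] := act_s_swaps k0.
have {}xy : x.1 != y.1 :> nat by [].
by case: x.2 y.2 => [] []; rewrite ?a1 ?a2 ?a3 ?a4 /pair_inv; lia.
Qed.

Lemma ninvB_tB x : sidx (w x) = 1%R ->
  ninvB (mulB (tB n) w) + x.2 = ninvB w + ~~ x.2.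
Proof.
move=> wx; have wxE := window_fst x; rewrite wx in wxE.
have one_x i : window w i = 1%R \/ window w i = (-1)%R -> i = x.1.
  by rewrite -wx; apply: window_eq_pt.
pose G (p : 'I_n * 'I_n) := pair_inv (window w p.1) (window w p.2) p.1 p.2.
pose F (p : 'I_n * 'I_n) := pair_inv (act_t (window w p.1)) (act_t (window w p.2)) p.1 p.2.
have FG p : p != (x.1, x.1) -> F p = G p.
  case: p => i j /= ne; apply: pair_inv_act_t; rewrite ?sidx_neq0 // => -[hi hj].
  by move: ne; rewrite (one_x i hi) (one_x j hj) eqxx.
have {FG} := sum_nat_eq_except1 FG.
have -> : \sum_p F p = ninvB (mulB (tB n) w).
  by apply: eq_bigr => p _; rewrite /F !window_tB.
rewrite -/(ninv (window w)) -/(ninvB w) {}/F {}/G /= wxE.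
by case: x.2; rewrite /pair_inv ltnn leqnn /=; lia.
Qed.

End OneSignedPerm.
End SignedPermutations.

Section CoxeterLength.
Variable n : nat.
Local Notation pt := ('I_n * bool)%type.
Local Notation genword s := (prodB (map (fun i : 'I_n => genB n i) s)).
Implicit Types (x y z : pt) (f g w : eltB n) (s : seq 'I_n).

Lemma signed_perm_mul f g : signed_perm f -> signed_perm g -> signed_perm (mulB f g).
Proof.
move=> [fi fs] [gi gs]; split => [a b|z]; rewrite !ffunE; first by move/fi/gi.
by rewrite gs fs.
Qed.

Lemma signed_perm_one : signed_perm (oneB n).
Proof. by split => [a b|z]; rewrite !ffunE. Qed.

Lemma signed_perm_invol g : (forall z, g (g z) = z) ->
  (forall z, g (negpt z) = negpt (g z)) -> signed_perm g.
Proof. by move=> gg gs; split => //; apply: (can_inj gg). Qed.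

Lemma sB_invol k z : 0 < k < n -> sB n k (sB n k z) = z.
Proof.
move=> hk; rewrite !ffunE /=; case: z => [p b]; congr (_, _); apply: val_inj => /=.
by rewrite !val_swp //; case/andP: hk => *; repeat case: eqP => /=; lia.
Qed.

Lemma tB_invol z : tB n (tB n z) = z.
Proof.
rewrite !ffunE; case: z => p b.
by case: (boolP (val p == 0)) => e /=; rewrite ?e ?(negbTE e) ?negbK.
Qed.

Lemma signed_perm_sB k : 0 < k < n -> signed_perm (sB n k).
Proof. by move=> hk; apply: signed_perm_invol => z; [apply: sB_invol | rewrite !ffunE]. Qed.

Lemma signed_perm_tB : signed_perm (tB n).
Proof.
apply: signed_perm_invol => z; first exact: tB_invol.
by rewrite !ffunE /=; case: ifP.
Qed.

Lemma genB_cases (i : 'I_n) :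
  (i = 0 :> nat /\ genB n i = tB n) \/ (0 < i < n /\ genB n i = sB n i).
Proof. by rewrite /genB ltn_ord andbT lt0n; case: eqP; [left | right]. Qed.

Lemma genB_invol (i : 'I_n) z : genB n i (genB n i z) = z.
Proof. by case: (genB_cases i) => -[hi ->]; [apply: tB_invol | apply: sB_invol]. Qed.

Lemma signed_perm_genB (i : 'I_n) : signed_perm (genB n i).
Proof.
by case: (genB_cases i) => -[hi ->]; [apply: signed_perm_tB | apply: signed_perm_sB].
Qed.

Lemma signed_perm_prodB (gs : seq (eltB n)) :
  {in gs, forall g, signed_perm g} -> signed_perm (prodB gs).
Proof.
elim: gs => [|g gs IH] /= sgs; first exact: signed_perm_one.
apply: signed_perm_mul; first by apply: sgs; rewrite mem_head.
by apply: IH => h hs; apply: sgs; rewrite inE hs orbT.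
Qed.

Lemma signed_perm_genword s : signed_perm (genword s).
Proof. by apply: signed_perm_prodB => g /mapP[i _ ->]; apply: signed_perm_genB. Qed.

Lemma ninvB_one : ninvB (oneB n) = 0.
Proof. by rewrite /ninvB /ninv big1 // => p _; rewrite /window /sidx !ffunE /= /pair_inv; lia. Qed.

Lemma ninvB_genB_le (i : 'I_n) w : signed_perm w -> ninvB (mulB (genB n i) w) <= ninvB w + 1.
Proof.
move=> sw; case: (genB_cases i) => -[hi ->].
  have [x wx] := signed_perm_sidx_surj sw (leq_ltn_trans (leq0n _) (ltn_ord i)).
  by have := ninvB_tB sw wx; lia.
case/andP: hi => i0 iN.
have [x wx] := signed_perm_sidx_surj sw (leq_ltn_trans (leq_pred i) iN).
have [y wy] := signed_perm_sidx_surj sw iN.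
by rewrite prednK // in wx; have := ninvB_sB sw i0 wx wy; lia.
Qed.

Lemma ninvB_genword_le s : ninvB (genword s) <= size s.
Proof.
elim: s => [|i s IH] /=; first by rewrite ninvB_one.
by apply: leq_trans (ninvB_genB_le i (signed_perm_genword s)) _; lia.
Qed.

Lemma ninvB_lt_boundB w : ninvB w < boundB n.
Proof.
have : ninvB w <= #|{: 'I_n * 'I_n}| * 2.
  rewrite -sum_nat_const; apply: leq_sum => p _; rewrite /pair_inv.
  by case: (_ && _); case: (_ && _).
rewrite /boundB card_ffun !card_prod card_ord card_bool ltnS => /leq_trans; apply.
case: n => [|m] //.
have sq : m.+1 * m.+1 * 2 <= (m.+1 * 2) ^ 2 by rewrite expnS expn1; nia.
by apply: leq_trans sq (leq_pexp2l _ _); lia.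
Qed.

Lemma wordBP (P : pred nat) k g :
  reflect (exists s, [/\ size s = k, all P (map val s) & genword s = g]) (wordB P k g).
Proof.
apply: (iffP existsP) => [[t /andP[hP /eqP <-]]|[s [<- hP <-]]].
  by exists t; rewrite size_tuple.
by exists (in_tuple s); rewrite hP eqxx.
Qed.

Lemma ninvB_le_lenB w : ninvB w <= lenB w.
Proof.
rewrite /lenB; set a := fun k => wordB predT k w.
case: (ltnP (find a (iota 0 (boundB n))) (size (iota 0 (boundB n)))) => h.
  have := nth_find 0 (a := a) (s := iota 0 (boundB n)); rewrite has_find => /(_ h).
  rewrite size_iota in h; rewrite nth_iota // add0n.
  by case/wordBP => s [<- _ <-]; apply: ninvB_genword_le.
by rewrite size_iota in h; apply: leq_trans h; apply: ltnW (ninvB_lt_boundB w).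
Qed.

Lemma lenB_le_genword s w : size s < boundB n -> genword s = w -> lenB w <= size s.
Proof.
move=> hs hw; rewrite /lenB leqNgt; apply/negP => /(before_find 0).
rewrite nth_iota // add0n => /negbT/negP; apply; apply/wordBP.
by exists s; rewrite all_predT.
Qed.

Lemma signed_perm_sorted_id w : signed_perm w ->
  (forall x, sidx (w x) = 1%R -> x.2 = false) ->
  (forall x y k, 0 < k -> sidx (w x) = Posz k -> sidx (w y) = Posz k.+1 ->
     (sidx x < sidx y)%R) ->
  w = oneB n.
Proof.
move=> sw no_t no_s.
(* squeeze w^-1(c) between c and c, inducting up from 1 and down from n *)
have lo c x : c < n -> sidx (w x) = Posz c.+1 -> (Posz c.+1 <= sidx x)%R.
  elim: c x => [|c IH] x cn wx; first by rewrite /sidx (no_t x wx); lia.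
  have [x' wx'] := signed_perm_sidx_surj sw (ltnW cn).
  by have := no_s x' x c.+1 isT wx' wx; have := IH x' (ltnW cn) wx'; lia.
have hi d c x : c + d = n.-1 -> sidx (w x) = Posz c.+1 -> (sidx x <= Posz c.+1)%R.
  elim: d c x => [|d IH] c x cd wx.
    by have := sidx_le x; have := ltn_ord x.1; lia.
  have [|y wy] := signed_perm_sidx_surj sw (_ : c.+1 < n); first lia.
  by have := no_s x y c.+1 isT wx wy; have := IH c.+1 y (etrans (addSnnS c d) cd) wy; lia.
have fix_pos x : (w x).2 = false -> w x = x.
  move=> wx2; have wx : sidx (w x) = Posz (w x).1.+1 by rewrite /sidx wx2.
  apply: sidx_inj; have := lo _ x (ltn_ord _) wx.
  by have := hi (n.-1 - (w x).1) _ x (_ : _ = _) wx; have := ltn_ord (w x).1; lia.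
apply/ffunP => z; rewrite ffunE; case: (boolP (w z).2) => wz2; last exact/fix_pos/negbTE.
have : w (negpt z) = negpt z by apply: fix_pos; rewrite (proj2 sw) /= wz2.
by rewrite (proj2 sw) => /(congr1 (@negpt n)); rewrite !negptK.
Qed.

Lemma exists_descent w : signed_perm w -> w != oneB n ->
  exists i : 'I_n, ninvB (mulB (genB n i) w) < ninvB w.
Proof.
move=> sw w1; apply/existsP; apply: contraNT w1 => /existsPn no_desc; apply/eqP.
apply: signed_perm_sorted_id => // [x wx|x y k k0 wx wy].
  apply/negbTE/negP => x2; have n0 : 0 < n := leq_ltn_trans (leq0n _) (ltn_ord x.1).
  by move: (no_desc (Ordinal n0)) (ninvB_tB sw wx); rewrite x2 /genB /=; lia.
have kn : k < n by case: (sidx_posE wy) => <- _.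
have xy : x != y by apply/eqP => exy; move: wy; rewrite -exy wx; lia.
case: ltrgtP => // [gt|/sidx_inj exy]; last by rewrite exy eqxx in xy.
by move: (no_desc (Ordinal kn)) (ninvB_sB sw k0 wx wy); rewrite /genB /= gtn_eqF; lia.
Qed.

Lemma genB_cancel (i : 'I_n) w : mulB (genB n i) (mulB (genB n i) w) = w.
Proof. by apply/ffunP => z; rewrite !ffunE genB_invol. Qed.

Lemma genword_of_descents (P : pred nat) (C : eltB n -> Prop) :
  (forall v, signed_perm v -> C v -> v != oneB n -> exists i : 'I_n,
     [/\ P i, ninvB (mulB (genB n i) v) < ninvB v & C (mulB (genB n i) v)]) ->
  forall w, signed_perm w -> C w ->
  exists s, [/\ all P (map val s), genword s = w & size s <= ninvB w].
Proof.
move=> desc w; have [k] := ubnP (ninvB w).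
elim: k w => // k IH w /ltnSE wk sw cw.
case: (eqVneq w (oneB n)) => [->|w1]; first by exists [::].
have [i [Pi di ci]] := desc w sw cw w1.
have sgw := signed_perm_mul (signed_perm_genB i) sw.
have [s [Ps gs hs]] := IH _ (leq_trans di wk) sgw ci.
by exists (i :: s); rewrite /= Pi Ps gs genB_cancel; split => //; lia.
Qed.

Lemma lenB_ninvB w : signed_perm w -> lenB w = ninvB w.
Proof.
move=> sw; apply/eqP; rewrite eqn_leq ninvB_le_lenB andbT.
have desc v : signed_perm v -> True -> v != oneB n -> exists i : 'I_n,
    [/\ true, ninvB (mulB (genB n i) v) < ninvB v & True].
  by move=> sv _ v1; have [i di] := exists_descent sv v1; exists i.
have [s [_ gs hs]] := @genword_of_descents predT (fun=> True) desc w sw I.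
exact: leq_trans (lenB_le_genword (leq_ltn_trans hs (ninvB_lt_boundB w)) gs) hs.
Qed.

End CoxeterLength.

Section Parabolic.
Variables (n l : nat).
Hypothesis l0 : 0 < l.
Local Notation pt := ('I_n * bool)%type.
Local Notation genword s := (prodB (map (fun i : 'I_n => genB n i) s)).
Implicit Types (x y z : pt) (v w : eltB n) (s : seq 'I_n).

Definition fixes_prefix w := forall x, (w x).2 = x.2 /\ (x.1 < l.-1 -> w x = x).

Lemma fixes_prefix_one : fixes_prefix (oneB n).
Proof. by move=> x; rewrite ffunE. Qed.

Lemma fixes_prefix_sB k w : l <= k -> fixes_prefix w -> fixes_prefix (mulB (sB n k) w).
Proof.
move=> lk fw x; rewrite ffunE; case: (fw x) => sgn fixp.
by split=> [|hx]; [rewrite ffunE | rewrite fixp // sB_fix //; apply/eqP; lia].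
Qed.

Lemma fixes_prefix_genB (i : 'I_n) w :
  l <= i -> fixes_prefix w -> fixes_prefix (mulB (genB n i) w).
Proof.
move=> li; case: (genB_cases i) => -[hi ->]; last exact: fixes_prefix_sB.
by move: li l0; rewrite hi leqn0 => /eqP ->.
Qed.

Lemma fixes_prefix_pre w x : signed_perm w -> fixes_prefix w -> (w x).1 < l.-1 -> w x = x.
Proof. by move=> sw fw /(proj2 (fw (w x)))/(proj1 sw). Qed.

Lemma fixes_prefix_descent (i : 'I_n) w : signed_perm w -> fixes_prefix w ->
  ninvB (mulB (genB n i) w) < ninvB w -> l <= i.
Proof.
move=> sw fw; case: (genB_cases i) => -[hi ->].
  have [x wx] := signed_perm_sidx_surj sw (leq_ltn_trans (leq0n _) (ltn_ord i)).
  have [_ wx2] := sidx_posE wx; have := ninvB_tB sw wx.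
  by rewrite -(proj1 (fw x)) wx2; lia.
case/andP: hi => i0 iN desc; rewrite leqNgt; apply/negP => il.
have [x wx] := signed_perm_sidx_surj sw (leq_ltn_trans (leq_pred i) iN).
have [y wy] := signed_perm_sidx_surj sw iN.
have [wx1 wx2] := sidx_posE wx; have [wy1 wy2] := sidx_posE wy.
rewrite prednK // in wx; have := ninvB_sB sw i0 wx wy.
have -> : x = w x by apply/esym/(fixes_prefix_pre sw fw); lia.
have y2 : y.2 = false by rewrite -(proj1 (fw y)).
have sy : (Posz i.+1 <= sidx y)%R.
  case: (ltnP y.1 l.-1) => hy; last by rewrite /sidx y2; lia.
  by rewrite -(proj2 (fw y) hy) wy; lia.
by rewrite wx; lia.
Qed.

Lemma in_parabP w : in_parab l n w <-> signed_perm w /\ fixes_prefix w.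
Proof.
split=> [/existsP[k /wordBP[s [_ Ps <-]]]|[sw fw]].
  split; first exact: signed_perm_genword.
  elim: s Ps => [|i s IH] /=; first by move=> _; apply: fixes_prefix_one.
  by case/andP=> /andP[li _] Ps; apply: fixes_prefix_genB (IH Ps).
have desc v : signed_perm v -> fixes_prefix v -> v != oneB n -> exists i : 'I_n,
    [/\ l <= i < n, ninvB (mulB (genB n i) v) < ninvB v & fixes_prefix (mulB (genB n i) v)].
  move=> sv fv v1; have [i di] := exists_descent sv v1.
  have li := fixes_prefix_descent sv fv di.
  by exists i; rewrite li ltn_ord; split => //; apply: fixes_prefix_genB.
have [s [Ps gs hs]] := @genword_of_descents _ (fun a => l <= a < n) _ desc w sw fw.
apply/existsP; exists (Ordinal (leq_ltn_trans hs (ninvB_lt_boundB w))).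
by apply/wordBP; exists s.
Qed.

Lemma parab_lengthen w x : signed_perm w -> fixes_prefix w ->
  x.1 = l.-1 :> nat -> x.2 = false -> (w x).1 < n.-1 ->
  exists2 v : eltB n, in_parab l n v & lenB w < lenB v.
Proof.
move=> sw fw x1 x2 wxn; set c : nat := (w x).1.
have wx : sidx (w x) = Posz c.+1 by rewrite /sidx (proj1 (fw x)) x2.
have lc : l.-1 <= c.
  rewrite leqNgt; apply/negP => hc.
  by have := hc; rewrite /c (fixes_prefix_pre sw fw hc) x1 ltnn.
have [|y wy] := signed_perm_sidx_surj sw (_ : c.+1 < n); first lia.
have [wy1 wy2] := sidx_posE wy; have y2 : y.2 = false by rewrite -(proj1 (fw y)).
have ly : l <= y.1.
  case: (ltngtP y.1 l.-1) => hy; first by move: wy1; rewrite (proj2 (fw y) hy); lia.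
    by rewrite -(prednK l0).
  have exy : x = y by apply: sidx_inj; rewrite /sidx x2 y2 x1 hy.
  by move: wy1; rewrite -exy -/c; lia.
have sx : sidx x = Posz l by rewrite /sidx x2 x1 prednK.
have sy : (Posz l < sidx y)%R by rewrite /sidx y2; lia.
have := ninvB_sB sw (ltn0Sn c) wx wy; rewrite sx => hinv.
have ck : 0 < c.+1 < n by lia.
have sv := signed_perm_mul (signed_perm_sB ck) sw.
exists (mulB (sB n c.+1) w); last by rewrite !lenB_ninvB //; lia.
by apply/in_parabP; split => //; apply: fixes_prefix_sB => //; lia.
Qed.

Lemma sigmaB_spec : l <= n.-1 ->
  [/\ signed_perm (sigmaB n l n), fixes_prefix (sigmaB n l n) &
      forall x, x.1 = l.-1 :> nat -> (sigmaB n l n x).1 = n.-1 :> nat].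
Proof.
move=> ln; have p1 : in_parab l n (oneB n).
  by apply/in_parabP; split; [apply: signed_perm_one | apply: fixes_prefix_one].
rewrite /sigmaB; case: (arg_maxnP (@lenB n) p1) => s /in_parabP[ss fs] smax.
split=> // x x1; wlog x2 : x x1 / x.2 = false => [base|].
  case: (boolP x.2) => [x2|/negbTE]; last exact: base.
  by rewrite -[x]negptK (proj2 ss) base //= x2.
case: (ltnP (s x).1 n.-1) => [lt|le]; last first.
  by apply/eqP; rewrite eqn_leq le andbT -ltnS prednK ?ltn_ord //; lia.
have [v pv lv] := parab_lengthen ss fs x1 x2 lt.
by have := smax v pv; rewrite /= leqNgt lv.
Qed.

End Parabolic.

Section Factors.
Variable n : nat.
Local Notation pt := ('I_n * bool)%type.
Implicit Types (x y z : pt).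

Lemma prodB_catE (gs hs : seq (eltB n)) z : prodB (gs ++ hs) z = prodB gs (prodB hs z).
Proof. by elim: gs => [|g gs IH] /=; rewrite !ffunE ?IH. Qed.

Lemma pt_eq x y : x.1 = y.1 :> nat -> x.2 = y.2 -> x = y.
Proof. by case: x y => [a b] [c d] /= /val_inj -> ->. Qed.

Lemma prodB_seq1 g z : prodB [:: g] z = g z :> pt.
Proof. by rewrite !ffunE. Qed.

Lemma rB_spec k z : 0 < k <= n ->
  (rB n k z).1 = (if z.1 == 0 :> nat then k.-1 else if z.1 < k then z.1.-1 else z.1) :> nat
  /\ (rB n k z).2 = (if z.1 == 0 :> nat then ~~ z.2 else z.2).
Proof.
elim: k => [|[|k] IH] // /andP[_ kn].
  by rewrite /= ffunE; case: z {IH} => [[[|p] hp] b].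
have [h1 h2] := IH (ltnW kn).
have -> : rB n k.+2 = mulB (sB n k.+1) (rB n k.+1) by [].
rewrite !ffunE /= val_swp; last lia.
split=> //; rewrite h1; case: z {IH h1 h2} => [[[|p] hp] b] /=; first by rewrite eqxx.
by case: (ltnP p.+1 k.+1) => ?; case: (ltnP p.+1 k.+2) => ? /=; do 2?case: eqP => ?; lia.
Qed.

Lemma aB_spec l z : l <= n ->
  (aB n l z).1 = (if z.1 < l then l.-1 - z.1 else z.1) :> nat
  /\ (aB n l z).2 = (if z.1 < l then ~~ z.2 else z.2).
Proof.
elim: l z => [|l IH] z ln; first by rewrite /aB /= ffunE.
have -> : aB n l.+1 z = aB n l (rB n l.+1 z).
  by rewrite /aB -[l.+1]addn1 iotaD map_cat prodB_catE add1n addn1 prodB_seq1.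
have [r1 r2] := rB_spec z (ln : 0 < l.+1 <= n).
have [a1 a2] := IH (rB n l.+1 z) (ltnW ln).
rewrite a1 a2 r1 r2; case: z {r1 r2 a1 a2} => [[[|p] hp] b] /=; first by rewrite ltnn; lia.
case: (ltnP p.+1 l.+1) => pl; last by rewrite ltnNge (ltnW pl).
by rewrite (_ : p < l) //; split=> //; lia.
Qed.

Lemma sign_prod_sB (js : seq nat) z : (prodB [seq sB n j | j <- js] z).2 = z.2.
Proof. by elim: js => [|j js IH] /=; rewrite !ffunE. Qed.

Lemma prod_sB_fix (js : seq nat) z : {in js, forall j, z.1.+2 <= j} ->
  prodB [seq sB n j | j <- js] z = z.
Proof.
elim: js => [|j js IH] hjs /=; first by rewrite ffunE.
rewrite ffunE IH => [|i hi]; last by apply: hjs; rewrite inE hi orbT.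
by have hj := hjs j (mem_head _ _); rewrite sB_fix //; apply/eqP; lia.
Qed.

Lemma prod_sB_iota a k z : 0 < a -> a + k <= n -> z.1 = (a + k).-1 :> nat ->
  (prodB [seq sB n j | j <- iota a k] z).1 = a.-1 :> nat.
Proof.
elim: k z => [|k IH] z a0 akn hz; first by rewrite /= ffunE hz addn0.
rewrite -addn1 iotaD map_cat prodB_catE prodB_seq1; apply: IH => //; first lia.
by rewrite ffunE /= val_swp /=; [do 2?case: eqP => ?; lia | lia].
Qed.

Lemma cB_fix (J : pred nat) z : (forall j, J j -> z.1.+2 <= j) -> cB n J z = z.
Proof. by move=> hJ; apply: prod_sB_fix => j; rewrite mem_filter => /andP[/hJ]. Qed.

(* In 1-based terms: [c_J] sends [a + k] to [a]. *)
Lemma cB_chain (J : pred nat) a k z : 0 < a -> a + k <= n ->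
  (forall j, 0 < j < a -> ~~ J j) -> (forall j, a <= j < a + k -> J j) ->
  (a + k < n -> ~~ J (a + k)) -> z.1 = (a + k).-1 :> nat ->
  (cB n J z).1 = a.-1 :> nat /\ (cB n J z).2 = z.2.
Proof.
move=> a0 akn notJ_below J_chain notJ_end hz; split; last exact: sign_prod_sB.
rewrite /cB (_ : iota 1 n.-1 = iota 1 a.-1 ++ iota a k ++ iota (a + k) (n - (a + k))); last first.
  by rewrite (_ : n.-1 = a.-1 + (k + (n - (a + k)))) ?iotaD ?add1n ?prednK //; lia.
rewrite !filter_cat !map_cat !prodB_catE.
have -> : [seq j <- iota 1 a.-1 | J j] = [::].
  by apply/eqP; rewrite -(filter_pred0 (iota 1 a.-1)); apply/eqP/eq_in_filter => j;
    rewrite mem_iota => hj; apply/negbTE/notJ_below; lia.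
have -> : [seq j <- iota a k | J j] = iota a k.
  by apply/all_filterP/allP => j; rewrite mem_iota; apply: J_chain.
rewrite (@prod_sB_fix [::]) // (@prod_sB_fix (filter J _)); first exact: prod_sB_iota.
move=> j; rewrite mem_filter mem_iota => /andP[Jj /andP[lj jn]].
case: (eqVneq j (a + k)) => [ej|]; last lia.
by move: Jj; rewrite ej (negbTE (notJ_end _)) //; lia.
Qed.

Lemma signed_perm_cB (J : pred nat) : signed_perm (cB n J).
Proof.
apply: signed_perm_prodB => g /mapP[j]; rewrite mem_filter mem_iota => /andP[_ hj] ->.
by apply: signed_perm_sB; lia.
Qed.

Lemma signed_perm_rB k : k <= n -> signed_perm (rB n k).
Proof.
elim: k => [|[|k] IH] kn; [exact: signed_perm_one | exact: signed_perm_tB |].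
by apply: signed_perm_mul; [apply: signed_perm_sB | apply: IH]; lia.
Qed.

Lemma signed_perm_aB l : l <= n -> signed_perm (aB n l).
Proof.
move=> ln; apply: signed_perm_prodB => g /mapP[k]; rewrite mem_iota => hk ->.
by apply: signed_perm_rB; lia.
Qed.

End Factors.

Section AlphaPreimage.
Variables (n l : nat) (I : {set 'I_n}).
Hypotheses (l0 : 0 < l) (ln : l <= n.-1) (Ipos : forall i : 'I_n, i \in I -> 0 < i).
Local Notation pt := ('I_n * bool)%type.
Local Notation inI j := [exists i in I, val i == j].
Local Notation cI := (cB n (fun j => inI j && (j < l))).
Local Notation cJ := (cB n (fun j => (l <= j) && ~~ inI j)).
Local Notation prefix := [set i : 'I_n | 0 < i < l].
Implicit Types (x y z : pt).

Lemma inIE (i : 'I_n) : inI i = (i \in I).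
Proof.
apply/existsP/idP => [[j /andP[jI /eqP/val_inj <-]] //|iI].
by exists i; rewrite iI eqxx.
Qed.

Lemma alphaBE x : alphaB l I x = cI (cJ (sigmaB n l n (aB n l x))).
Proof. by rewrite !ffunE. Qed.

Lemma cI_to_one m z : 0 < m <= l -> (forall j, 0 < j < m -> inI j) ->
  (m < l -> ~~ inI m) -> z.1 = m.-1 :> nat -> z.2 = false -> sidx (cI z) = 1%R.
Proof.
move=> /andP[m0 ml] below notm z1 z2.
have [c1 c2] : (cI z).1 = 0 :> nat /\ (cI z).2 = z.2.
  apply: (@cB_chain n _ 1 m.-1); rewrite ?add1n ?prednK //.
  - by have := ltn_ord z.1; lia.
  - by move=> j; lia.
  - by move=> j hj; rewrite below //; lia.
  - move=> mn; case: (ltnP m l) => [/notm/negbTE-> //|lm].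
    by rewrite andbF.
by rewrite /sidx c2 z2 c1.
Qed.

Lemma prefix_properE : (prefix \proper I) = (prefix \subset I) && [exists i in I, l <= i].
Proof.
rewrite properE; congr andb; apply/subsetPn/existsP => [[i iI]|[i /andP[iI li]]].
  by rewrite inE Ipos //= -leqNgt => li; exists i; rewrite iI.
by exists i => //; rewrite inE (leq_gtF li) andbF.
Qed.

Lemma signed_perm_alphaB : signed_perm (alphaB l I).
Proof.
have [sigma_perm _ _] := sigmaB_spec l0 ln.
rewrite /alphaB; apply: signed_perm_mul; first exact: signed_perm_cB.
apply: signed_perm_mul; first exact: signed_perm_cB.
by apply: signed_perm_mul sigma_perm (signed_perm_aB _); lia.
Qed.

Lemma prefix_inI : prefix \subset I -> forall j, 0 < j < l -> inI j.
Proof.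
move=> /subsetP sub j jl; have jn : j < n by lia.
by apply/existsP; exists (Ordinal jn); rewrite sub ?inE /=.
Qed.

Lemma alpha_preimage_hole : ~~ (prefix \subset I) ->
  exists2 x, sidx (alphaB l I x) = 1%R & x.2.
Proof.
case/subsetPn => i; rewrite inE => /andP[i0 il] iI.
have hole : exists j, (0 < j) && ~~ inI j by exists i; rewrite i0 inIE.
case: (ex_minnP hole) => m /andP[m0 notm] mmin.
have ml : m < l by apply: leq_ltn_trans (mmin i _) il; rewrite i0 inIE.
have below j : 0 < j < m -> inI j.
  by case/andP=> j0; apply: contraTT => nj; rewrite -leqNgt mmin // j0.
have [_ fs _] := sigmaB_spec l0 ln.
have lmn : l - m < n by lia.
exists (Ordinal lmn, true) => //.
have [] := aB_spec (Ordinal lmn, true) (_ : l <= n); first lia.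
rewrite /= (_ : l - m < l); last lia.
set z := aB n l _ => z1 z2; rewrite alphaBE -/z (proj2 (fs z)); last lia.
rewrite [cJ z]cB_fix => [|j /andP[lj _]]; last lia.
by apply: (cI_to_one (m := m)) => //; [rewrite m0 ltnW | lia].
Qed.

Lemma alpha_preimage_low : prefix \subset I -> ~~ [exists i in I, l <= i] ->
  exists2 x, sidx (alphaB l I x) = 1%R & x.2.
Proof.
move=> sub /existsPn none; have n0 : 0 < n by lia.
have [_ fs top] := sigmaB_spec l0 ln.
exists (Ordinal n0, true) => //.
have [] := aB_spec (Ordinal n0, true) (_ : l <= n); first lia.
rewrite /= l0 subn0; set z := aB n l _ => z1 z2; rewrite alphaBE.
have [] := @cB_chain n (fun j => (l <= j) && ~~ inI j) l (n - l) (sigmaB n l n z) l0.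
- by lia.
- by move=> j hj; rewrite (ltn_geF (_ : j < l)) //; lia.
- move=> j /andP[lj _]; rewrite lj /=; apply/existsP => -[i /andP[iI /eqP ij]].
  by have := none i; rewrite iI ij lj.
- by lia.
- by rewrite top //; lia.
move=> u1 u2; apply: (cI_to_one (m := l)) => //.
- by rewrite l0 leqnn.
- exact: prefix_inI sub.
- by rewrite ltnn.
- by rewrite u2 (proj1 (fs z)).
Qed.

Lemma alpha_preimage_high : prefix \subset I -> [exists i in I, l <= i] ->
  exists2 x, sidx (alphaB l I x) = 1%R & ~~ x.2.
Proof.
move=> sub above; have [ss fs top] := sigmaB_spec l0 ln.
have hm : exists j, (l <= j) && inI j.
  by case/existsP: above => i /andP[iI li]; exists i; rewrite li inIE.
case: (ex_minnP hm) => m /andP[lm Im] mmin.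
have mn : m < n by case/existsP: Im => i /andP[_ /eqP <-]; apply: ltn_ord.
have [|y sy] := signed_perm_sidx_surj ss (_ : m.-1 < n); first lia.
have [sy1 sy2] := sidx_posE sy.
have y2 : y.2 = false by rewrite -(proj1 (fs y)).
have ly : l <= y.1.
  case: (ltngtP y.1 l.-1) => hy; first by move: sy1; rewrite (proj2 (fs y) hy); lia.
    by rewrite -(prednK l0).
  by move: sy1; rewrite top //; lia.
exists y; rewrite ?y2 // alphaBE.
have [] := aB_spec y (_ : l <= n); first lia.
rewrite ltnNge ly /= => a1 a2.
have -> : aB n l y = y by apply: pt_eq.
have [] := @cB_chain n (fun j => (l <= j) && ~~ inI j) l (m - l) (sigmaB n l n y) l0.
- by lia.
- by move=> j hj; rewrite (ltn_geF (_ : j < l)) //; lia.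
- move=> j /andP[lj jm]; rewrite lj /=; apply: contraTN jm => Ij.
  by rewrite subnKC // -leqNgt mmin // lj Ij.
- by rewrite subnKC // lm Im.
- by rewrite subnKC.
move=> u1 u2; apply: (cI_to_one (m := l)) => //.
- by rewrite l0 leqnn.
- exact: prefix_inI sub.
- by rewrite ltnn.
- by rewrite u2 (proj1 (fs y)).
Qed.

Lemma alpha_preimage_one :
  exists2 x, sidx (alphaB l I x) = 1%R & ~~ x.2 = (prefix \proper I).
Proof.
rewrite prefix_properE; case: (boolP (prefix \subset I)) => sub /=; last first.
  by have [x ? x2] := alpha_preimage_hole sub; exists x; rewrite ?x2.
case: (boolP [exists i in I, l <= i]) => above.
  by have [x ? x2] := alpha_preimage_high sub above; exists x; rewrite ?x2.
by have [x ? x2] := alpha_preimage_low sub above; exists x; rewrite ?x2.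
Qed.

End AlphaPreimage.

Theorem lemma3p2 (n l : nat) (I : {set 'I_n}) :
  1 <= l <= n.-1 ->
  (forall i : 'I_n, i \in I -> 0 < val i) ->
  (lenB (mulB (tB n) (alphaB l I)) > lenB (alphaB l I) <->
   [set i : 'I_n | 0 < val i < l] \proper I).
Proof.
move=> /andP[l0 ln] Ipos.
have [x ax <-] := alpha_preimage_one l0 ln Ipos.
have sa := signed_perm_alphaB I l0 ln.
rewrite !lenB_ninvB //; last exact: signed_perm_mul (signed_perm_tB _) sa.
by have := ninvB_tB sa ax; case: x.2 => /=; split => //; lia.
Qed.
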